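(* Let $T$ be an oriented tree and $U=\{v\in V(T):\deg^-_T(v)\geq 2\}$. Suppose that $T$ is grounded, that the minimal subtree of $T$ containing $U$ is an out-arborescence, that $|U|\geq 2$, and that $T$ has no leaf of in-degree $1$. Then there exist integers $k\ge 1$ and $\ell\ge 1$ such that $T$ is isomorphic to a subgraph of $T(k,\ell)$.
   Context: An oriented tree is an orientation of an undirected tree. For an oriented tree $T$, a height function $h_T\colon V(T)\to\mathbb{Z}$ satisfies $h_T(v)=h_T(u)+1$ for every edge $(u,v)\in E(T)$ (unique up to an additive constant); $T$ is grounded if $h_T$ is constant on the vertices of in-degree at least $2$. An out-arborescence is an oriented tree with all edges oriented away from a designated root. $B^+_{k,\ell}$ is the complete $\ell$-ary tree of depth $k$ (distance from root to leaves $k$) with all edges oriented away from the root. $S^-_{k,\ell}$ is the $(k-1)$-subdivision of the in-star with $\ell$ leaves: a centre vertex together with $\ell$ directed paths of length $k$ ending at the centre, pairwise sharing only the centre. $T(k,\ell)$ is the oriented tree obtained from $B^+_{k,\ell}$ by identifying each leaf with the centre of a new (disjoint) copy of $S^-_{k,\ell}$. *)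

From mathcomp Require Import all_boot all_order all_algebra.
Set Implicit Arguments. Unset Strict Implicit. Unset Printing Implicit Defensive.
Import GRing.Theory Num.Theory.

Section OrientedTrees.
Variable V : finType.
Variable E : rel V.

Definition adj : rel V := fun u v => E u v || E v u.

Definition indeg (v : V) : nat := #|[set u | E u v]|.
Definition deg (v : V) : nat := #|[set u | adj u v]|.

Definition oriented_tree : Prop :=
  [/\ irreflexive E,
      (forall u v, E u v -> ~~ E v u),
      (forall u v, connect adj u v) &
      (forall s : seq V, uniq s -> 3 <= size s -> ~~ cycle adj s)].

Definition Uset : {set V} := [set v | 2 <= indeg v].

Definition height_fun (h : V -> int) : Prop :=
  forall u v, E u v -> h v = (h u + 1)%R.

Definition grounded : Prop :=
  exists h : V -> int, height_fun h /\ {in Uset &, forall u v, h u = h v}.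

Definition connected_in (W : {set V}) : bool :=
  [forall u in W, forall v in W,
     connect (fun x y => [&& x \in W, y \in W & adj x y]) u v].

Definition min_subtree (A : {set V}) : {set V} :=
  \bigcap_(W : {set V} | (A \subset W) && connected_in W) W.

Definition out_arborescence_on (S : {set V}) : Prop :=
  exists2 r, r \in S &
    forall v, v \in S -> connect (fun x y => [&& x \in S, y \in S & E x y]) r v.

Definition leaf (v : V) : bool := deg v == 1.
End OrientedTrees.

(* Vertices are triples (w, j, t) with w : seq nat.
   - (w, 0, 0) with size w <= k, entries < l : vertex w of B^+_{k,l}
     (root = [::], children of w are rcons w i, i < l);
   - (w, j, t) with size w = k, j < l, 1 <= t <= k : the vertex at distance t
     from the centre w on the j-th path of the copy of S^-_{k,l} glued at
     the leaf w. *)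
Definition Tvert (k l : nat) (x : seq nat * nat * nat) : bool :=
  let: (w, j, t) := x in
  [&& all (fun i => i < l) w, size w <= k &
      if t == 0 then j == 0 else [&& size w == k, j < l & t <= k]].

Definition Tedge (k l : nat) (x y : seq nat * nat * nat) : Prop :=
  Tvert k l x /\ Tvert k l y /\
  let: (w, j, t) := x in let: (w', j', t') := y in
  [\/ (t = 0 /\ t' = 0 /\ exists2 i, i < l & w' = rcons w i),
      (t = 1 /\ t' = 0 /\ w' = w) |
      (1 <= t' /\ t = t'.+1 /\ w' = w /\ j' = j)].

Definition embeds_in_T (V : finType) (E : rel V) (k l : nat) : Prop :=
  exists f : V -> seq nat * nat * nat,
    [/\ injective f, (forall v, Tvert k l (f v)) &
        (forall u v, E u v -> Tedge k l (f u) (f v))].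

From mathcomp Require Import all_boot all_order all_algebra.
From mathcomp Require Import zify.
Set Implicit Arguments. Unset Strict Implicit. Unset Printing Implicit Defensive.
Import Order.TTheory GRing.Theory.

(* Let H be the common height of U.  Every vertex reaches a sink; a sink
   outside U would be a leaf of in-degree 1, and an out-neighbour of a vertex of
   U would reach a sink above height H.  So U is exactly the set of sinks, and
   every other vertex has in-degree at most one: its ancestors form a chain.
   The trunk, the vertices comparable with the root r reaching U, is closed
   under out-arcs and goes into B^+_{k,l}: a trunk vertex at depth d = H - h(v)
   is sent to the word of length k - d listing its trunk ancestors by height.
   Any other vertex v reaches a single u in U, through a single in-neighbour j
   of u, and goes to distance d on the j-th path of the in-star glued at the
   image of u.  Both uniqueness claims come from acyclicity: two in-neighbours
   of z joined by a path avoiding z coincide. *)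

Section Digraphs.
Variables (V : finType) (E : rel V).

Definition sink x := [forall y, ~~ E x y].

Lemma sink_connect x y : sink x -> connect E x y -> y = x.
Proof.
move=> /forallP sx /connectP[[|z p] /= xp ->] //.
by move: xp; rewrite (negbTE (sx z)).
Qed.

Lemma sink_deg s : sink s -> deg E s = indeg E s.
Proof.
move=> /forallP sx; apply: eq_card => x.
by rewrite !inE /adj (negbTE (sx x)) orbF.
Qed.

Lemma connect_last_arc x y :
  connect E x y -> x != y -> exists2 z, connect E x z & E z y.
Proof.
move=> /connectP[p xp ->]; case/lastP: p xp => [|q z]; first by rewrite eqxx.
rewrite rcons_path last_rcons => /andP[xq ez] _.
by exists (last x q) => //; apply/connectP; exists q.
Qed.

Lemma indeg_le1_arc_eq y y' z : indeg E z <= 1 -> E y z -> E y' z -> y = y'.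
Proof.
move=> le1 eyz ey'z; apply/eqP; apply: contraTT le1 => neq; rewrite -ltnNge.
have sub : [set y; y'] \subset [set u | E u z].
  by apply/subsetP => x; rewrite !inE => /orP[]/eqP->.
by apply: leq_trans (subset_leq_card sub); rewrite cards2 neq.
Qed.

Lemma connect_total_to p x y :
  (forall w, connect E w p -> indeg E w <= 1) ->
  connect E x p -> connect E y p -> connect E x y || connect E y x.
Proof.
move=> indeg1 /connectP[q xq ep] yp; subst p.
elim: q x xq indeg1 yp => [|x1 q IH] x /=.
  by move=> _ _ yx; rewrite yx orbT.
move=> /andP[ex1 x1q] indeg1 yp.
have x1p : connect E x1 (last x1 q) by apply/connectP; exists q.
case/orP: (IH x1 x1q indeg1 yp) => [x1y|yx1].
  by rewrite (connect_trans (connect1 ex1) x1y).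
have [->|yx1'] := eqVneq y x1; first by rewrite connect1.
case: (connect_last_arc yx1 yx1') => z yz ezx1.
by rewrite (indeg_le1_arc_eq (indeg1 x1 x1p) ex1 ezx1) yz orbT.
Qed.

Definition adj_without z : rel V := fun a b => [&& adj E a b, a != z & b != z].

Lemma adj_without_sym z : symmetric (adj_without z).
Proof. by move=> a b; rewrite /adj_without /adj orbC [(a != z) && _]andbC. Qed.

Lemma connect_adj_without z a b :
  sink z -> connect E a b -> b != z -> connect (adj_without z) a b.
Proof.
move=> sz /connectP[p + ->]; elim: p a => [|y p IH] a /=; first by rewrite connect0.
move=> /andP[eay yp] bz.
have az : a != z by apply: contraTneq sz => <-; apply/forallPn; exists y; rewrite eay.
have yz : y != z.
  apply: contraNneq bz => eyz; subst y.
  by apply/eqP/(sink_connect sz); apply/connectP; exists p.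
apply: connect_trans (IH y yp bz); apply: connect1.
by rewrite /adj_without /adj eay az yz.
Qed.

Lemma path_adj_without_notin z x q : path (adj_without z) x q -> z \notin q.
Proof.
elim: q x => //= y q IH x /andP[/and3P[_ _ yz] /IH].
by rewrite inE negb_or eq_sym yz.
Qed.

Lemma subset_min_subtree (A : {set V}) : A \subset min_subtree E A.
Proof. by apply/bigcapsP => W /andP[]. Qed.

Section OrientedTree.
Hypothesis tree : oriented_tree E.

Lemma arc_neq y u : E y u -> y != u.
Proof. by case: tree => irr _ _ _; apply: contraTneq => ->; rewrite irr. Qed.

(* Otherwise a path between them in T - z, closed up through z, is a cycle. *)
Lemma tree_in_neighbours_eq y1 y2 z :
  E y1 z -> E y2 z -> connect (adj_without z) y1 y2 -> y1 = y2.
Proof.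
move=> e1 e2 /connectP[p pp ly]; subst y2.
case/shortenP: pp e2 => q pq uq _ e2; apply/eqP/negPn/negP => y12.
case: q pq uq e2 y12 => [|a q] pq uq e2 y12; first by rewrite eqxx in y12.
case: tree => _ _ _ acyc.
have zq : z \notin y1 :: a :: q.
  by rewrite in_cons negb_or eq_sym arc_neq ?(path_adj_without_notin pq).
have := acyc [:: z, y1, a & q]; rewrite cons_uniq zq uq => /(_ isT isT) /negP; apply.
have /= /andP[ya aq] : path (adj E) y1 (a :: q) by apply: sub_path pq => u v /and3P[].
by rewrite /= rcons_path ya aq /adj e1 e2 orbT.
Qed.

End OrientedTree.

Section Height.
Variable h : V -> int.
Hypothesis hf : height_fun E h.

Lemma height_path x p : path E x p -> h (last x p) = (h x + (size p)%:Z)%R.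
Proof.
elim: p x => [|y p IH] x /=; first by rewrite addr0.
by move=> /andP[exy yp]; rewrite IH // (hf exy); lia.
Qed.

Lemma height_connect x y : connect E x y -> x = y \/ (h x < h y)%R.
Proof.
move=> /connectP[[|z p] xp ->]; [by left | right].
by rewrite (height_path xp) /=; lia.
Qed.

Lemma height_connect_le x y : connect E x y -> (h x <= h y)%R.
Proof. by case/height_connect => [->|/ltW]. Qed.

Lemma connect_height_eq x y : connect E x y -> h x = h y -> x = y.
Proof. by case/height_connect => // lt eq; move: lt; rewrite eq ltxx. Qed.

Lemma connect_sink v : exists2 s, connect E v s & sink s.
Proof.
have [s vs smax] :=
  @arg_maxnP V v (connect E v) (fun x => absz (h x - h v)) (connect0 _ _).
exists s => //; apply/forallP => y; apply/negP => esy.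
have := smax y (connect_trans vs (connect1 esy)).
by have := height_connect_le vs; have := hf esy; lia.
Qed.

End Height.
End Digraphs.

Section Embedding.
Variables (V : finType) (E : rel V).
Hypothesis tree : oriented_tree E.
Variables (h : V -> int) (H : int).
Hypothesis hf : height_fun E h.
Hypothesis h_U : {in Uset E, forall u, h u = H}.
Variable r : V.
Hypothesis r_connect_U : {in Uset E, forall u, connect E r u}.
Hypothesis U_gt1 : 1 < #|Uset E|.
Hypothesis leaf_indeg : forall v, leaf E v -> indeg E v != 1.

Local Notation U := (Uset E).

Lemma notin_U_indeg v : v \notin U -> indeg E v <= 1.
Proof. by rewrite inE -leqNgt. Qed.

Lemma sink_in_U s : sink E s -> s \in U.
Proof.
move=> ss; apply: contraT => sU.
have /card_gt1P[u [_ [uU _ _]]] := U_gt1.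
have su : s != u by apply: contraNneq sU => ->.
case: tree => _ _ conn _.
have /connectP[[|y p] /= sp eu] := conn s u; first by rewrite eu eqxx in su.
have eys : E y s.
  by case/andP: sp; rewrite /adj; move/forallP: ss => /(_ y) /negbTE ->.
have : 0 < indeg E s by apply/card_gt0P; exists y; rewrite inE.
move: sU; rewrite inE => sU indeg_gt0.
have indeg1 : indeg E s = 1 by lia.
by move: (@leaf_indeg s); rewrite /leaf sink_deg // indeg1 eqxx => /(_ isT).
Qed.

Lemma U_sink u : u \in U -> sink E u.
Proof.
move=> uU; apply/forallP => y; apply/negP => euy.
have [s ys /sink_in_U sU] := connect_sink hf y.
have := height_connect_le hf ys; have := h_U sU; have := h_U uU; have := hf euy.
lia.
Qed.

Lemma sinkE v : sink E v = (v \in U).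
Proof. by apply/idP/idP => [/sink_in_U|/U_sink]. Qed.

Lemma U_connect v : exists2 u, u \in U & connect E v u.
Proof. by have [s vs] := connect_sink hf v; rewrite sinkE; exists s. Qed.

Lemma arc_notin_U v y : E v y -> v \notin U.
Proof. by move=> evy; rewrite -sinkE; apply/forallPn; exists y; rewrite negbK. Qed.

Lemma ancestors_total p x y : p \notin U ->
  connect E x p -> connect E y p -> connect E x y || connect E y x.
Proof.
move=> pU; apply: connect_total_to => w /connectP[[|z q] /= wq ep].
  by apply: notin_U_indeg; rewrite -ep.
by case/andP: wq => /arc_notin_U /notin_U_indeg.
Qed.

Lemma r_notin_U : r \notin U.
Proof.
apply/negP => rU; have /card_gt1P[u1 [u2 [u1U u2U]]] := U_gt1.
have rs : sink E r by rewrite sinkE.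
by rewrite (sink_connect rs (r_connect_U u1U)) (sink_connect rs (r_connect_U u2U)) eqxx.
Qed.

Lemma r_neq_U u : u \in U -> r != u.
Proof. by apply: contraTneq => <-; apply: r_notin_U. Qed.

Definition trunk x := connect E x r || connect E r x.

Lemma U_trunk u : u \in U -> trunk u.
Proof. by move=> /r_connect_U ru; rewrite /trunk ru orbT. Qed.

Lemma notin_trunk_U v : ~~ trunk v -> v \notin U.
Proof. exact/contra/U_trunk. Qed.

Lemma trunk_connect_without z x :
  z \in U -> trunk x -> x != z -> connect (adj_without E z) x r.
Proof.
move=> zU /orP[xr|rx] xz; have zs : sink E z by rewrite sinkE.
  by rewrite connect_adj_without // r_neq_U.
by rewrite (sym_connect_sym (adj_without_sym E z)) connect_adj_without.
Qed.

(* The last arcs into u of the paths from v and from r are joined in T - u,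
   so they coincide, and v and r are then ancestors of a common non-sink. *)
Lemma connect_without_trunk u v : u \in U ->
  connect E v u -> v != u -> connect (adj_without E u) v r -> trunk v.
Proof.
move=> uU vu vnu vr; have us : sink E u by rewrite sinkE.
have csym := sym_connect_sym (adj_without_sym E u).
have [y vy eyu] := connect_last_arc vu vnu.
have [p rp epu] := connect_last_arc (r_connect_U uU) (r_neq_U uU).
have yv : connect (adj_without E u) y v.
  by rewrite csym connect_adj_without ?(arc_neq tree).
have rp' : connect (adj_without E u) r p.
  by rewrite connect_adj_without ?(arc_neq tree).
have eyp := tree_in_neighbours_eq tree eyu epu (connect_trans yv (connect_trans vr rp')).
by subst p; apply: ancestors_total (arc_notin_U eyu) vy rp.
Qed.

Lemma trunk_arc v v' : E v v' -> trunk v -> trunk v'.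
Proof.
move=> e /orP[vr|rv]; last by rewrite /trunk (connect_trans rv (connect1 e)) orbT.
have [v'U|v'U] := boolP (v' \in U); first exact: U_trunk.
have [u uU v'u] := U_connect v'.
have v'nu : v' != u by apply: contraNneq v'U => ->.
have vnu : v != u by apply: contraNneq (arc_notin_U e) => ->.
apply: (connect_without_trunk uU v'u v'nu).
apply: connect_trans (_ : connect _ v' v) (trunk_connect_without uU _ vnu).
  by apply: connect1; rewrite /adj_without /adj e orbT v'nu.
by rewrite /trunk vr.
Qed.

Lemma trunk_connect x y : trunk x -> connect E x y -> trunk y.
Proof.
move=> + /connectP[p + ->]; elim: p x => //= z p IH x tx /andP[exz zp].
exact: IH (trunk_arc exz tx) zp.
Qed.

Lemma trunk_in_neighbours_eq y y' z :
  E y z -> E y' z -> trunk y -> trunk y' -> y = y'.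
Proof.
move=> ey ey' ty ty'; have [zU|zU] := boolP (z \in U); last first.
  exact: indeg_le1_arc_eq (notin_U_indeg zU) ey ey'.
apply: (tree_in_neighbours_eq tree ey ey').
apply: connect_trans (trunk_connect_without zU ty (arc_neq tree ey)) _.
by rewrite (sym_connect_sym (adj_without_sym E z)) trunk_connect_without ?(arc_neq tree).
Qed.

Definition depth v := absz (H - h v).

Definition Tdepth := (\max_(v : V) depth v).+1.

Lemma depthE v : ((depth v)%:Z = H - h v)%R.
Proof.
have [u uU vu] := U_connect v.
by have := height_connect_le hf vu; rewrite (h_U uU) /depth; lia.
Qed.

Lemma depth_lt v : depth v < Tdepth.
Proof. by rewrite ltnS (leq_bigmax v). Qed.

Lemma depth_arc v v' : E v v' -> depth v = (depth v').+1.
Proof. by move=> e; have := depthE v; have := depthE v'; have := hf e; lia. Qed.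

Lemma depth_U v : v \in U -> depth v = 0.
Proof. by move=> vU; have := depthE v; rewrite (h_U vU); lia. Qed.

Lemma depth_gt0 v : v \notin U -> 0 < depth v.
Proof.
move=> vU; have [u uU vu] := U_connect v.
have [evu|] := height_connect hf vu; first by rewrite evu uU in vU.
by have := depthE v; rewrite (h_U uU); lia.
Qed.

Definition level i : int := (H - Tdepth%:Z + 1 + i%:Z)%R.

Lemma level_depth v : level (Tdepth - depth v).-1 = h v.
Proof. by have := depthE v; have := depth_lt v; rewrite /level; lia. Qed.

Definition trunk_ancestor v i :=
  [pick x | trunk x && connect E x v && (h x == level i)].

(* The trunk ancestor of v at a given height is unique when it exists;
   heights with none are padded with 0. *)
Definition address v : seq nat :=
  mkseq (fun i => if trunk_ancestor v i is Some x then enum_rank x : nat else 0)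
        (Tdepth - depth v).

Lemma trunk_ancestor_self v :
  trunk v -> trunk_ancestor v (Tdepth - depth v).-1 = Some v.
Proof.
move=> tv; rewrite /trunk_ancestor level_depth.
case: pickP => [x /andP[/andP[_ xv] /eqP hx]|/(_ v)].
  by rewrite (connect_height_eq hf xv hx).
by rewrite tv connect0 eqxx.
Qed.

Lemma trunk_ancestor_arc v v' i : E v v' -> trunk v -> i < Tdepth - depth v ->
  trunk_ancestor v' i = trunk_ancestor v i.
Proof.
move=> e tv lti; apply: eq_pick => x /=.
have [tx|] := boolP (trunk x); last by [].
have [/eqP hx|] := boolP (h x == level i); rewrite ?andbT ?andbF //=.
have hlt : (h x < h v')%R by rewrite hx /level; have := depthE v; have := hf e; lia.
apply/idP/idP => [xv'|xv]; last exact: connect_trans xv (connect1 e).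
have xnv' : x != v' by apply: contraTneq hlt => ->; rewrite ltxx.
have [y xy eyv'] := connect_last_arc xv' xnv'.
by rewrite (trunk_in_neighbours_eq e eyv' tv (trunk_connect tx xy)).
Qed.

Lemma size_address v : size (address v) = Tdepth - depth v.
Proof. exact: size_mkseq. Qed.

Lemma address_bounded v : all (fun i => i < #|V|) (address v).
Proof.
apply/allP => _ /mapP[i _ ->]; case: trunk_ancestor => [x|]; first exact: ltn_ord.
by apply/card_gt0P; exists r.
Qed.

Lemma nth_address_last v :
  trunk v -> nth 0 (address v) (Tdepth - depth v).-1 = enum_rank v.
Proof.
move=> tv; rewrite nth_mkseq ?trunk_ancestor_self //.
by have := depth_lt v; lia.
Qed.

Lemma address_arc v v' : E v v' -> trunk v ->
  address v' = rcons (address v) (enum_rank v').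
Proof.
move=> e tv; have sz : Tdepth - depth v' = (Tdepth - depth v).+1.
  by have := depth_arc e; have := depth_lt v; lia.
rewrite /address sz mkseqS; congr rcons.
  by apply/eq_in_map => i; rewrite mem_iota => /andP[_ /(trunk_ancestor_arc e tv) ->].
by have := trunk_ancestor_self (trunk_arc e tv); rewrite sz /= => ->.
Qed.

Definition branch_sink v := odflt v [pick u | (u \in U) && connect E v u].

Definition branch_entry v :=
  odflt v [pick x | connect E v x && E x (branch_sink v)].

Lemma branch_sink_spec v : branch_sink v \in U /\ connect E v (branch_sink v).
Proof.
rewrite /branch_sink; case: pickP => [u /andP[] //|] /=.
by have [u uU vu] := U_connect v; move=> /(_ u); rewrite uU vu.
Qed.

Lemma branch_sink_eq v u :
  ~~ trunk v -> u \in U -> connect E v u -> branch_sink v = u.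
Proof.
move=> ntv uU vu; apply/eqP; move: ntv; apply: contraNT => neq.
have [u'U vu'] := branch_sink_spec v; have us : sink E u by rewrite sinkE.
have vnu : v != u.
  by apply: contraNneq neq => evu; subst v; rewrite (sink_connect us vu').
apply: (connect_without_trunk uU vu vnu).
apply: connect_trans (_ : connect _ v (branch_sink v)) _.
  exact: connect_adj_without.
by rewrite (sym_connect_sym (adj_without_sym E u)) connect_adj_without // r_connect_U.
Qed.

Lemma branch_entry_spec v : ~~ trunk v ->
  connect E v (branch_entry v) /\ E (branch_entry v) (branch_sink v).
Proof.
move=> ntv; rewrite /branch_entry; case: pickP => [x /andP[] //|] /=.
have [uU vu] := branch_sink_spec v.
have vnu : v != branch_sink v by apply: contraNneq (notin_trunk_U ntv) => ->.
by have [y vy eyu] := connect_last_arc vu vnu; move=> /(_ y); rewrite vy eyu.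
Qed.

Lemma branch_entry_eq v x :
  ~~ trunk v -> connect E v x -> E x (branch_sink v) -> branch_entry v = x.
Proof.
move=> ntv vx ex; have [vj ej] := branch_entry_spec ntv.
have [uU _] := branch_sink_spec v; have us : sink E (branch_sink v) by rewrite sinkE.
apply: (tree_in_neighbours_eq tree ej ex); apply: connect_trans (_ : connect _ _ v) _.
  by rewrite (sym_connect_sym (adj_without_sym E _)) connect_adj_without ?(arc_neq tree).
by rewrite connect_adj_without ?(arc_neq tree).
Qed.

Lemma branch_arc v v' : E v v' -> ~~ trunk v -> ~~ trunk v' ->
  branch_sink v' = branch_sink v /\ branch_entry v' = branch_entry v.
Proof.
move=> e ntv ntv'; have [uU v'u] := branch_sink_spec v'.
have eu : branch_sink v' = branch_sink v.
  by apply/esym/branch_sink_eq => //; apply: connect_trans (connect1 e) v'u.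
have [v'j ej] := branch_entry_spec ntv'.
split => //; apply/esym/branch_entry_eq; rewrite -?eu //.
exact: connect_trans (connect1 e) v'j.
Qed.

Lemma branch_arc_trunk v v' : E v v' -> ~~ trunk v -> trunk v' ->
  v' \in U /\ branch_sink v = v'.
Proof.
move=> e ntv tv'; suff v'U : v' \in U by split; last exact: branch_sink_eq (connect1 e).
apply: contraNT ntv => v'U; case/orP: tv' => [v'r|rv'].
  by rewrite /trunk (connect_trans (connect1 e) v'r).
exact: ancestors_total v'U (connect1 e) rv'.
Qed.

Definition embedding v : seq nat * nat * nat :=
  if trunk v then (address v, 0, 0)
  else (address (branch_sink v), enum_rank (branch_entry v) : nat, depth v).

Lemma Tvert_embedding v : Tvert Tdepth #|V| (embedding v).
Proof.
rewrite /embedding /Tvert; have [tv|ntv] := ifP; rewrite address_bounded size_address.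
  by rewrite leq_subr.
have [uU _] := branch_sink_spec v.
rewrite depth_U // subn0 leqnn eqxx ltn_ord ltnW ?depth_lt //=.
by have /lt0n_neq0/negbTE -> := depth_gt0 (notin_trunk_U (negbT ntv)).
Qed.

Lemma embedding_inj : injective embedding.
Proof.
move=> v v'; rewrite /embedding.
have [tv|ntv] := boolP (trunk v); have [tv'|ntv'] := boolP (trunk v').
- case=> eaddr; have edepth : depth v = depth v'.
    have := size_address v; rewrite eaddr size_address.
    by have := depth_lt v; have := depth_lt v'; lia.
  have := nth_address_last tv.
  by rewrite eaddr edepth nth_address_last // => /ord_inj/enum_rank_inj.
- by case=> _ _ edepth; move: (depth_gt0 (notin_trunk_U ntv')); rewrite -edepth.
- by case=> _ _ edepth; move: (depth_gt0 (notin_trunk_U ntv)); rewrite edepth.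
case=> _ /ord_inj/enum_rank_inj eentry edepth.
have [vj ej] := branch_entry_spec ntv; have [v'j _] := branch_entry_spec ntv'.
have eh : h v = h v' by have := depthE v; have := depthE v'; rewrite edepth; lia.
rewrite -eentry in v'j; case/orP: (ancestors_total (arc_notin_U ej) vj v'j) => vv'.
  by rewrite (connect_height_eq hf vv' eh).
by rewrite (connect_height_eq hf vv' (esym eh)).
Qed.

Lemma Tedge_embedding v v' : E v v' -> Tedge Tdepth #|V| (embedding v) (embedding v').
Proof.
move=> e; split; [exact: Tvert_embedding | split; first exact: Tvert_embedding].
rewrite /embedding; have [tv|ntv] := boolP (trunk v); have [tv'|ntv'] := boolP (trunk v').
- apply: Or31; do 2!split=> //.
  by exists (enum_rank v'); rewrite ?ltn_ord ?(address_arc e).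
- by move: ntv'; rewrite (trunk_arc e tv).
- have [v'U ->] := branch_arc_trunk e ntv tv'.
  by apply: Or32; rewrite (depth_arc e) depth_U.
have [-> ->] := branch_arc e ntv ntv'.
by apply: Or33; rewrite (depth_arc e) depth_gt0 ?notin_trunk_U.
Qed.

Lemma embeds_in_T_Tdepth : embeds_in_T E Tdepth #|V|.
Proof.
exists embedding; split; [exact: embedding_inj | exact: Tvert_embedding |].
exact: Tedge_embedding.
Qed.

End Embedding.

Theorem lemma3p1 (V : finType) (E : rel V) :
  oriented_tree E ->
  grounded E ->
  out_arborescence_on E (min_subtree E (Uset E)) ->
  2 <= #|Uset E| ->
  (forall v, leaf E v -> indeg E v != 1) ->
  exists k l, [/\ 1 <= k, 1 <= l & embeds_in_T E k l].
Proof.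
move=> tree [h [hf h_U]] [r _ r_connect_S] U_gt1 leaf_indeg.
have /card_gt1P[u0 [_ [u0U _ _]]] := U_gt1.
have r_connect_U : {in Uset E, forall u, connect E r u}.
  move=> u /(subsetP (subset_min_subtree E _)) /r_connect_S.
  by apply: connect_sub => x y /and3P[_ _ /connect1].
exists (Tdepth h (h u0)), #|V|; split=> //; first by apply/card_gt0P; exists r.
have h_U0 : {in Uset E, forall u, h u = h u0} by move=> u uU; apply: h_U.
exact: (embeds_in_T_Tdepth tree hf h_U0 r_connect_U U_gt1 leaf_indeg).
Qed.
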